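(* The set $\{\mathcal A_p\mid p \text{ a prime number}\}$, the variety $\mathcal{SL}$ and the variety $\mathcal{ZM}$ are each definable in $\mathbf{Com}$.
   Context: $\mathbf{Com}$ denotes the lattice of all commutative semigroup varieties with join $\vee$ and meet $\wedge$; a subset (or element) of a lattice $L$ is definable in $L$ if it is the set of elements satisfying some first-order formula with one free variable in the language $\{\vee,\wedge\}$. $\operatorname{var}\Sigma$ denotes the variety defined by identities $\Sigma$; $w=0$ (with $x$ not occurring in $w$) stands for $wx=xw=w$. $\mathcal A_n=\operatorname{var}\{x^ny=y,\ xy=yx\}$, $\mathcal{SL}=\operatorname{var}\{x^2=x,\ xy=yx\}$ (semilattices), $\mathcal{ZM}=\operatorname{var}\{xy=0\}$ (null semigroups). *)

From mathcomp Require Import all_boot.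
Set Implicit Arguments. Unset Strict Implicit. Unset Printing Implicit Defensive.

Record comSemigroup := ComSemigroup {
  csg_car :> Type;
  csg_op : csg_car -> csg_car -> csg_car;
  csg_opA : forall x y z, csg_op x (csg_op y z) = csg_op (csg_op x y) z;
  csg_opC : forall x y, csg_op x y = csg_op y x }.

(** * Semigroup words over the countable alphabet of letters [nat].
    A (nonempty) word x_{i0} x_{i1} ... x_{ik} is the pair (i0, [:: i1; ...; ik]). *)
Definition word := (nat * seq nat)%type.
Definition identity := (word * word)%type.

Definition weval (S : comSemigroup) (v : nat -> S) (w : word) : S :=
  foldl (fun a i => csg_op a (v i)) (v w.1) w.2.

Definition sat (S : comSemigroup) (e : identity) : Prop :=
  forall v : nat -> S, weval v e.1 = weval v e.2.

(** A set of identities [Sigma] presents the variety var Sigma (of commutative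
    semigroups); an element of Com is represented by such a presentation. *)
Definition presentation := identity -> Prop.

Definition models (Sigma : presentation) (S : comSemigroup) : Prop :=
  forall e, Sigma e -> sat S e.

Definition same_variety (V W : presentation) : Prop :=
  forall S : comSemigroup, models V S <-> models W S.

(** Meet = intersection of the classes: presented by the union of identities. *)
Definition vmeet (V W : presentation) : presentation := fun e => V e \/ W e.
(** Join = smallest variety containing both: presented by all identities
    holding in every member of V and of W. *)
Definition vjoin (V W : presentation) : presentation :=
  fun e => forall S : comSemigroup, (models V S \/ models W S) -> sat S e.

Inductive lterm := LVar of nat | LJoin of lterm & lterm | LMeet of lterm & lterm.

Inductive lform :=
  | FEq of lterm & lterm
  | FNot of lform
  | FAnd of lform & lform
  | FOr of lform & lform
  | FImp of lform & lform
  | FAll of nat & lform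
  | FEx of nat & lform.

Fixpoint teval (env : nat -> presentation) (t : lterm) : presentation :=
  match t with
  | LVar n => env n
  | LJoin a b => vjoin (teval env a) (teval env b)
  | LMeet a b => vmeet (teval env a) (teval env b)
  end.

Definition upd (env : nat -> presentation) (n : nat) (V : presentation) :=
  fun m => if m == n then V else env m.

Fixpoint holds (env : nat -> presentation) (f : lform) : Prop :=
  match f with
  | FEq a b => same_variety (teval env a) (teval env b)
  | FNot g => ~ holds env g
  | FAnd g h => holds env g /\ holds env h
  | FOr g h => holds env g \/ holds env h
  | FImp g h => holds env g -> holds env h
  | FAll n g => forall V, holds (upd env n V) g
  | FEx n g => exists V, holds (upd env n V) g
  end.

Definition definable_set (X : presentation -> Prop) : Prop :=
  exists phi : lform, forall env, holds env phi <-> X (env 0).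

Definition definable_elem (V : presentation) : Prop :=
  definable_set (fun W => same_variety W V).

(** * The specific varieties (letters: x = 0, y = 1, z = 2) *)
Definition comm_id : identity := ((0, [:: 1]), (1, [:: 0])).

(** A_n = var{x^n y = y, xy = yx}  (for n >= 1) *)
Definition A_var (n : nat) : presentation :=
  fun e => e = ((0, rcons (nseq n.-1 0) 1), (1, [::])) \/ e = comm_id.

(** SL = var{x^2 = x, xy = yx} *)
Definition SL_var : presentation :=
  fun e => e = ((0, [:: 0]), (0, [::])) \/ e = comm_id.

(** ZM = var{xy = 0}, i.e. var{xyz = xy, zxy = xy} *)
Definition ZM_var : presentation :=
  fun e => e = ((0, [:: 1; 2]), (0, [:: 1])) \/ e = ((2, [:: 0; 1]), (0, [:: 1])).

(** The atoms of Com are SL, ZM and the A_p (p prime), and being an atom is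
    first-order.  The three kinds are told apart by the varieties C > A in
    which the atom A is the only atom: there is no such C above SL, above A_p
    they are exactly the A_(p^k), k >= 2, and so form a chain, while above ZM there are
    the two incomparable varieties var{xyz = 0} and var{x^2 = 0, xyzt = 0}. *)

From mathcomp Require Import all_boot ssralg zmodp.
From Stdlib Require Import Classical.
Set Implicit Arguments. Unset Strict Implicit. Unset Printing Implicit Defensive.

Section Products.
Variable S : comSemigroup.
Local Notation op := (@csg_op S).
Implicit Types (x y u g : S) (v : nat -> S) (l : seq nat) (w : word).

Lemma opCA x y (z : S) : op x (op y z) = op y (op x z).
Proof. by rewrite csg_opA (csg_opC x y) -csg_opA. Qed.

Definition lprod v x l := foldl (fun a i => op a (v i)) x l.

Lemma lprod_cat v x l1 l2 : lprod v x (l1 ++ l2) = lprod v (lprod v x l1) l2.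
Proof. exact: foldl_cat. Qed.

Lemma lprod_opl v x y l : lprod v (op x y) l = op x (lprod v y l).
Proof. by elim: l y => //= i l IH y; rewrite -csg_opA IH. Qed.

Lemma lprod_cons v x i l : lprod v x (i :: l) = op (v i) (lprod v x l).
Proof. by rewrite /= csg_opC -lprod_opl. Qed.

Lemma lprod_perm v x l l' : perm_eq l l' -> lprod v x l = lprod v x l'.
Proof.
elim: l l' => [|i l IH] l'; first by rewrite perm_sym => /perm_nilP ->.
move=> pl; have il : i \in l' by rewrite -(perm_mem pl) mem_head.
move: pl; case/splitPr: il => l1 l2.
have e : perm_eq (l1 ++ i :: l2) (i :: l1 ++ l2).
  by rewrite (perm_catCA l1 [:: i] l2) perm_refl.
rewrite (permPr e) perm_cons => /IH.
by move=> IHl; rewrite lprod_cons IHl !lprod_cat lprod_cons.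
Qed.

Lemma lprod_ind (P : S -> Prop) v x l :
  P x -> (forall y j, j \in l -> P y -> P (op y (v j))) -> P (lprod v x l).
Proof.
elim: l x => //= j l IH x Px step; apply: IH => [|y k kl]; apply: step => //.
- exact: mem_head.
- by rewrite in_cons kl orbT.
Qed.

Definition letters w := w.1 :: w.2.

Lemma lprod_lets v x w : lprod v x (letters w) = op x (weval v w).
Proof. exact: lprod_opl. Qed.

Lemma weval_rem v w i : i \in letters w -> weval v w = lprod v (v i) (rem i (letters w)).
Proof.
case: w => h t; rewrite /letters /= in_cons; have [-> // | _ /= it] := eqVneq i h.
change (lprod v (v h) t = lprod v (v i) (h :: rem i t)).
by rewrite (lprod_perm _ _ (perm_to_rem it)) !lprod_cons -!lprod_opl csg_opC.
Qed.

Lemma weval_content v w1 w2 : (forall j, op (v j) (v j) = v j) ->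
  letters w1 =i letters w2 -> weval v w1 = weval v w2.
Proof.
move=> idem c12.
have absorb w (m : seq nat) : {subset m <= letters w} -> lprod v (weval v w) m = weval v w.
  move=> sub; apply: (lprod_ind (P := fun y => y = weval v w)) => // _ j /sub jw ->.
  rewrite (weval_rem v jw) csg_opC -lprod_opl; congr lprod; exact: idem.
have [e1 e2] : weval v w1 = op (weval v w1) (weval v w2) /\
               weval v w2 = op (weval v w2) (weval v w1).
  by rewrite -!lprod_lets !absorb // => j; rewrite c12.
by rewrite e1 csg_opC -e2.
Qed.

(** [pw x k] is x^(k+1): semigroups have no x^0. *)
Definition pw x k := iter k (fun a => op a x) x.

Lemma pwS x k : pw x k.+1 = op (pw x k) x. Proof. by []. Qed.

Lemma pw_op x a b : op (pw x a) (pw x b) = pw x (a + b).+1.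
Proof. by elim: b => [|b IH]; rewrite ?addn0 // pwS csg_opA IH addnS. Qed.

Lemma pw_period x k j : pw x k = x -> pw x (j + k) = pw x j.
Proof. by move=> xk; elim: j => [|j IH]; rewrite ?add0n // addSn pwS IH. Qed.

Lemma pw_idem x k : op x x = x -> pw x k = x.
Proof. by move=> xx; elim: k => //= k ->. Qed.

Lemma weval_const x w : weval (fun _ => x) w = pw x (size w.2).
Proof.
rewrite /weval /pw; case: w => _ t /=.
have gen y : foldl (fun a _ => op a x) y t = iter (size t) (fun a => op a x) y.
  by elim: t y => //= _ t IH y; rewrite IH -iterSr.
exact: gen.
Qed.

(** [upw u g k] is g^k computed with [u] as the identity (so that [upw u g 0 = u]). *)
Definition upw u g k := iter k (op g) u.

Section UnitPowers.
Variables u g : S.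
Hypotheses (uu : op u u = u) (ug : op u g = g).

Lemma upw_unitl k : op u (upw u g k) = upw u g k.
Proof. by elim: k => //= k IH; rewrite opCA IH. Qed.

Lemma upwD m k : upw u g (m + k) = op (upw u g m) (upw u g k).
Proof. by elim: m => [|m IH]; rewrite ?upw_unitl //= IH csg_opA. Qed.

Lemma upwS k : upw u g k.+1 = pw g k.
Proof.
elim: k => [|k IH]; first by rewrite /= csg_opC ug.
by rewrite -[LHS]/(op g (upw u g k.+1)) IH csg_opC.
Qed.

Lemma upw1 : upw u g 1 = g. Proof. exact: upwS. Qed.

Lemma upwM a b : upw u (upw u g a) b = upw u g (a * b).
Proof. by elim: b => [|b IH]; rewrite ?muln0 //= IH mulnS upwD. Qed.

Lemma upw_dvd m k : upw u g m = u -> m %| k -> upw u g k = u.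
Proof.
move=> gm /dvdnP[c ->]; rewrite mulnC; elim: c => [|c IH]; rewrite ?muln0 //.
by rewrite mulnS upwD gm IH.
Qed.

Lemma upw_gcd m n : upw u g m = u -> upw u g n = u -> upw u g (gcdn m n) = u.
Proof.
elim/ltn_ind: m n => m IH n gm gn.
have [->|m0] := posnP m; first by rewrite gcd0n.
rewrite gcdnE (gtn_eqF m0); apply: (IH _ (ltn_pmod n m0) m _ gm).
by move: gn; rewrite {1}(divn_eq n m) upwD (upw_dvd gm) ?dvdn_mull // upw_unitl.
Qed.

Lemma upw_subn n a b : 0 < n -> upw u g n = u -> upw u g a = upw u g b ->
  b <= a -> upw u g (a - b) = u.
Proof.
move=> n0 gn gab ba.
have inv : op (upw u g b) (upw u g (b * n - b)) = u.
  by rewrite -upwD subnKC ?leq_pmulr // (upw_dvd gn) ?dvdn_mull.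
rewrite -(subnK ba) upwD in gab.
have := upw_unitl (a - b); rewrite csg_opC => <-.
by rewrite -{2}inv csg_opA gab.
Qed.

End UnitPowers.

Lemma weval_count v w u g i : op u u = u -> op u g = g ->
  (forall j, v j = if j == i then g else u) ->
  weval v w = upw u g (count_mem i (letters w)).
Proof.
move=> uu ug vE.
have step m j : op (upw u g m) (v j) = upw u g (m + (j == i)).
  rewrite vE; case: eqP => _; first by rewrite addn1 csg_opC.
  by rewrite addn0 csg_opC upw_unitl.
have lp m l : lprod v (upw u g m) l = upw u g (m + count_mem i l).
  elim: l m => [|j l IH] m; first by rewrite addn0.
  by rewrite lprod_cons IH csg_opC step -addnA (addnC (count_mem i l)).
have uv : op u (v w.1) = v w.1 by rewrite vE; case: ifP.
by rewrite -[weval v w]/(lprod v (v w.1) w.2) -uv (step 0) lp.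
Qed.

Lemma lprod_nseq v x k j : lprod v x (nseq k.+1 j) = op x (pw (v j) k).
Proof.
by elim: k => // k IH; rewrite lprod_cons IH opCA (csg_opC (v j)).
Qed.

End Products.

Lemma count_flatten_nseq (s : seq nat) (f : nat -> nat) x : uniq s ->
  count_mem x (flatten [seq nseq (f j) j | j <- s]) = (x \in s) * f x.
Proof.
elim: s => //= j s IH /andP[js us]; rewrite count_cat count_nseq IH // in_cons.
have [-> | ne] /= := eqVneq x j; first by rewrite eqxx (negbTE js) addn0.
by rewrite [j == x]eq_sym (negbTE ne).
Qed.

Section Models.
Variable S : comSemigroup.
Local Notation op := (@csg_op S).

Lemma modelsA n : models (A_var n) S <-> forall x y : S, op (pw x n.-1) y = y.
Proof.
have eA (v : nat -> S) : weval v (0, rcons (nseq n.-1 0) 1) = op (pw (v 0) n.-1) (v 1).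
  rewrite /weval /= foldl_rcons; congr op.
  have gen k y : foldl (fun a i => op a (v i)) y (nseq k 0) = iter k (fun a => op a (v 0)) y.
    by elim: k y => //= k IH y; rewrite IH -iterSr.
  exact: gen.
split=> [hA x y | hA e [->|->] v].
- by have := hA _ (or_introl erefl) (fun j => if j == 0 then x else y); rewrite /sat eA.
- by rewrite eA hA.
- by rewrite /weval /= csg_opC.
Qed.

Lemma modelsSL : models SL_var S <-> forall x : S, op x x = x.
Proof.
split=> [hSL x | idem e [->|->] v]; first exact: hSL _ (or_introl erefl) (fun _ => x).
- by rewrite /weval /= idem.
- by rewrite /weval /= csg_opC.
Qed.

Lemma modelsZM : models ZM_var S <-> forall x y z : S, op (op x y) z = op x y.
Proof.
split=> [hZM x y z | hZM e [->|->] v].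
- exact: hZM _ (or_introl erefl) (fun j => if j == 0 then x else if j == 1 then y else z).
- by rewrite /weval /= hZM.
- by rewrite /weval /= -csg_opA (csg_opC (v 2)) hZM.
Qed.

Lemma A_unit n : models (A_var n) S -> forall x y : S, pw x n.-1 = pw y n.-1.
Proof. by move/modelsA=> hA x y; rewrite -[LHS](hA y) csg_opC hA. Qed.

Lemma ZM_const : models ZM_var S -> forall x y z t : S, op x y = op z t.
Proof. by move/modelsZM=> hZM x y z t; rewrite -(hZM x y (op z t)) csg_opC hZM. Qed.

Lemma ZM_lprod (v : nat -> S) x y l : models ZM_var S -> lprod v (op x y) l = op x y.
Proof. by move/modelsZM=> hZM; apply: (lprod_ind (P := fun z => z = op x y)) => // _ j _ ->. Qed.

Lemma weval_A_counts n (v : nat -> S) w1 w2 : 0 < n -> models (A_var n) S ->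
  (forall i, count_mem i (letters w1) = count_mem i (letters w2) %[mod n]) ->
  weval v w1 = weval v w2.
Proof.
move=> n0 hS c12; have /modelsA hA := hS.
(* Every block of n equal letters evaluates to the identity [u]. *)
set u := pw (v 0) n.-1.
have uE w : weval v w = lprod v u (letters w) by rewrite lprod_lets hA.
pose s := undup (letters w1 ++ letters w2).
pose blocks f := flatten [seq nseq (f j) j | j <- s].
have nseq_id x j k : lprod v x (nseq (n * k) j) = x.
  have xn : lprod v x (nseq n j) = x by rewrite -(prednK n0) lprod_nseq csg_opC hA.
  elim: k => [|k IH]; first by rewrite muln0.
  by rewrite mulnS nseqD lprod_cat xn IH.
have blocks_id x f t : lprod v x (flatten [seq nseq (n * f j) j | j <- t]) = x.
  by elim: t x => //= j t IH x; rewrite lprod_cat nseq_id IH.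
have reduce w : {subset letters w <= s} ->
    lprod v u (letters w) = lprod v u (blocks (fun j => count_mem j (letters w) %% n)).
  move=> sub.
  rewrite -[RHS](blocks_id _ (fun j => count_mem j (letters w) %/ n) s) -lprod_cat.
  apply: lprod_perm; apply/allP => x _; apply/eqP.
  rewrite count_cat !count_flatten_nseq ?undup_uniq //.
  case: (boolP (x \in s)) => xs; first by rewrite !mul1n addnC mulnC -divn_eq.
  by rewrite !mul0n; apply/count_memPn; apply: contra xs; apply: sub.
have s1 : {subset letters w1 <= s} by move=> x; rewrite mem_undup mem_cat => ->.
have s2 : {subset letters w2 <= s} by move=> x; rewrite mem_undup mem_cat orbC => ->.
rewrite !uE (reduce _ s1) (reduce _ s2); congr (lprod v u (flatten _)).
by apply: eq_map => j; rewrite c12.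
Qed.

End Models.

(** * Atoms *)

Definition subvar (V W : presentation) := forall S, models V S -> models W S.
Definition trivial_var (V : presentation) :=
  forall S, models V S -> forall x y : S, x = y.
Definition atom_var (V : presentation) :=
  ~ trivial_var V /\ forall Y, subvar V Y \/ trivial_var (vmeet V Y).
Definition sole_atom (A C : presentation) :=
  subvar A C /\ ~ same_variety A C /\
  forall B, atom_var B -> subvar B C -> same_variety B A.

Section Lattice.
Implicit Types V W X : presentation.

Lemma models_vmeet V W S : models (vmeet V W) S <-> models V S /\ models W S.
Proof.
split=> [hS | [hV hW] e [ /hV | /hW ] //].
by split=> e he; apply: hS; [left | right].
Qed.

Lemma trivial_models V (S : comSemigroup) : (forall x y : S, x = y) -> models V S.
Proof. by move=> hS e _ v; apply: hS. Qed.

Lemma same_variety_sym V W : same_variety V W -> same_variety W V.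
Proof. by move=> hVW S; rewrite hVW. Qed.

Lemma same_variety_trans V W X :
  same_variety V W -> same_variety W X -> same_variety V X.
Proof. by move=> hVW hWX S; rewrite hVW hWX. Qed.

Lemma same_subvar V W : same_variety V W -> subvar V W.
Proof. by move=> hVW S /hVW. Qed.

Lemma subvar_trans V W X : subvar V W -> subvar W X -> subvar V X.
Proof. by move=> hVW hWX S /hVW /hWX. Qed.

Lemma subvar_antisym V W : subvar V W -> subvar W V -> same_variety V W.
Proof. by move=> hVW hWV S; split; [apply: hVW | apply: hWV]. Qed.

Lemma same_vmeet_subvar V W : same_variety (vmeet V W) V <-> subvar V W.
Proof.
split=> [hVW S hS | hVW S]; first by have /hVW/models_vmeet[] := hS.
by rewrite models_vmeet; split=> [[] | hS] //; split=> //; apply: hVW.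
Qed.

Lemma same_trivial V W : trivial_var V -> (same_variety W V <-> trivial_var W).
Proof.
move=> hV; split=> [hWV S /hWV | hW S]; first exact: hV.
by split=> hS; apply: trivial_models; [apply: hW | apply: hV].
Qed.

Lemma trivial_var_same V W : same_variety V W -> trivial_var V -> trivial_var W.
Proof. by move=> hVW hV S /hVW; apply: hV. Qed.

Lemma atom_var_same V W : same_variety V W -> atom_var V -> atom_var W.
Proof.
move=> hVW [ntV hV]; split=> [hW | Y].
  by apply: ntV; apply: trivial_var_same hW; apply: same_variety_sym.
case: (hV Y) => [hVY | hVY]; [left | right].
  exact: subvar_trans (same_subvar (same_variety_sym hVW)) hVY.
by apply: trivial_var_same hVY => S; rewrite !models_vmeet hVW.
Qed.

Lemma sole_atom_same A A' C : same_variety A A' -> sole_atom A C -> sole_atom A' C.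
Proof.
move=> hA [hAC [neAC hC]]; split.
  exact: subvar_trans (same_subvar (same_variety_sym hA)) hAC.
split=> [hA'C | B hB hBC]; first exact: neAC (same_variety_trans hA hA'C).
exact: same_variety_trans (hC B hB hBC) hA.
Qed.

Lemma atom_subvar V W : atom_var W -> ~ trivial_var V -> subvar V W -> same_variety V W.
Proof.
move=> [_ hW] ntV hVW; case: (hW V) => [hWV | hWV]; first exact: subvar_antisym.
case: ntV => S hS; apply: hWV; rewrite models_vmeet; split=> //; exact: hVW.
Qed.

Lemma not_subvar V W : ~ subvar V W -> exists S, models V S /\ ~ models W S.
Proof.
move/not_all_ex_not=> [S hS]; exists S.
by have [] := imply_to_and _ _ hS.
Qed.

Lemma not_models V S : ~ models V S -> exists e, V e /\ ~ sat S e.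
Proof.
move/not_all_ex_not=> [e he]; exists e.
by have [] := imply_to_and _ _ he.
Qed.

Lemma atom_of_sep V : ~ trivial_var V ->
  (forall S e, models V S -> ~ sat S e ->
     forall T, models V T -> sat T e -> forall x y : T, x = y) ->
  atom_var V.
Proof.
move=> ntV sep; split=> // Y; case: (classic (subvar V Y)) => [|nVY]; first by left.
right; have [S [hS /not_models[e [Ye nSe]]]] := not_subvar nVY.
by move=> T /models_vmeet[hT hYT]; apply: (sep S e hS nSe T hT (hYT e Ye)).
Qed.

End Lattice.

Lemma sat_sym (S : comSemigroup) (e : identity) : sat S e -> sat S (e.2, e.1).
Proof. by move=> hS v; rewrite /= hS. Qed.

Section Separation.
Variable T : comSemigroup.
Local Notation op := (@csg_op T).

Lemma sat_sep e i (a b : T) : op a a = a -> op b b = b -> sat T e ->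
  i \in letters e.1 -> i \notin letters e.2 -> a = b \/ op a b = b.
Proof.
move=> aa bb hT i1 i2; pose v j := if j == i then a else b.
have lhs : weval v e.1 = a \/ weval v e.1 = op a b.
  have -> : weval v e.1 = lprod v a (rem i (letters e.1)) by rewrite (weval_rem v i1) /v eqxx.
  apply: (lprod_ind (P := fun y => y = a \/ y = op a b)) => [|y j _ hy]; first by left.
  rewrite /v; case: (j == i); case: hy => ->.
  - by left.
  - by right; rewrite -csg_opA (csg_opC b) csg_opA aa.
  - by right.
  - by right; rewrite -csg_opA bb.
have rhs : weval v e.2 = b.
  move: i2; case: e.2 => h t; rewrite /letters /= in_cons negb_or => /andP[ih it].
  apply: (lprod_ind (P := fun y => y = b)) => [|y j jt ->]; rewrite /v.
    by rewrite eq_sym (negbTE ih).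
  by case: eqP jt it => [-> -> | _ _ _].
by have := hT v; rewrite rhs; case: lhs => ->; [left | right].
Qed.

Lemma SL_sep e i : models SL_var T -> sat T e ->
  i \in letters e.1 -> i \notin letters e.2 -> forall a b : T, a = b.
Proof.
move/modelsSL=> idem hT i1 i2 a b.
case: (sat_sep (idem a) (idem b) hT i1 i2) => // ab.
case: (sat_sep (idem b) (idem a) hT i1 i2) => // ba.
by rewrite -ba csg_opC ab.
Qed.

Lemma A_sep p e i : prime p -> models (A_var p) T -> sat T e ->
  count_mem i (letters e.1) %% p <> count_mem i (letters e.2) %% p ->
  forall a b : T, a = b.
Proof.
move=> pp hT hTe c12; have p0 := prime_gt0 pp.
suff aE (a : T) : a = pw a p.-1 by move=> a b; rewrite (aE a) (aE b) (A_unit hT a b).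
have /modelsA hA := hT; set u := pw a p.-1.
have uu : op u u = u by apply: hA.
have ua : op u a = a by apply: hA.
have ap : upw u a p = u by rewrite -(prednK p0) upwS.
have sep c1 c2 : upw u a c1 = upw u a c2 -> c2 <= c1 -> c1 %% p <> c2 %% p -> a = u.
  move=> a12 c21 ne12; have a0 := upw_subn uu p0 ap a12 c21.
  have cop : coprime p (c1 - c2).
    by rewrite prime_coprime // -eqn_mod_dvd //; apply/eqP.
  by have := upw_gcd uu a0 ap; rewrite gcdnC (eqP cop) (upw1 ua).
have := hTe (fun j => if j == i then a else u).
rewrite !(weval_count (i := i) _ uu ua) // => a12.
case: (leqP (count_mem i (letters e.2)) (count_mem i (letters e.1))) => c21.
  exact: sep a12 c21 c12.
by apply: sep (esym a12) (ltnW c21) _ => /esym.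
Qed.

End Separation.

Lemma ZM_shape (N : comSemigroup) e : models ZM_var N -> ~ sat N e ->
  exists x w, w <> (x, [::]) /\ forall T, sat T e -> sat T ((x, [::]), w).
Proof.
case: e => [[h1 t1] [h2 t2]] hN nNe.
case: t1 nNe => [|j1 t1] nNe.
  by exists h1, (h2, t2); split=> // hw; apply: nNe; rewrite hw.
case: t2 nNe => [|j2 t2] nNe.
  by exists h2, (h1, j1 :: t1); split=> [hw | T /sat_sym //]; apply: nNe; rewrite hw.
case: nNe => v; rewrite /weval /=.
by rewrite -!/(lprod v _ _) !(ZM_lprod v) //; apply: ZM_const.
Qed.

Lemma ZM_sep (T : comSemigroup) x w : models ZM_var T -> sat T ((x, [::]), w) ->
  w <> (x, [::]) -> forall a b : T, a = b.
Proof.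
move=> hT hTw; case: w hTw => h [|j t] hTw nw a b.
  have := hTw (fun k => if k == x then a else b); rewrite /weval /= eqxx.
  by case: eqP => // hx; rewrite hx in nw.
suff sq (c : T) : c = csg_op c c by rewrite (sq a) (sq b) (ZM_const hT a a b b).
have := hTw (fun _ => c); rewrite /weval /= -/(lprod _ _ _).
by rewrite -/(lprod (fun _ => c) (csg_op c c) t) ZM_lprod.
Qed.

Definition S2 : comSemigroup := ComSemigroup andbA andbC.
Definition N2 : comSemigroup :=
  @ComSemigroup bool (fun _ _ => false) (fun _ _ _ => erefl) (fun _ _ => erefl).
Definition Zs n : comSemigroup := ComSemigroup (@GRing.addrA 'Z_n) (@GRing.addrC _).

Lemma S2_SL : models SL_var S2. Proof. by apply/modelsSL; case. Qed.
Lemma N2_ZM : models ZM_var N2. Proof. exact/modelsZM. Qed.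
Lemma S2_nontrivial : ~ forall x y : S2, x = y. Proof. by move/(_ true false). Qed.
Lemma N2_nontrivial : ~ forall x y : N2, x = y. Proof. by move/(_ true false). Qed.

Lemma S2_not_A n : ~ models (A_var n) S2.
Proof. by move/modelsA/(_ false true); rewrite pw_idem. Qed.

Lemma N2_not_A n : ~ models (A_var n) N2.
Proof. by move/modelsA/(_ true true). Qed.

Lemma S2_not_ZM : ~ models ZM_var S2.
Proof. by move/modelsZM/(_ true true false). Qed.

Lemma Zs_one_neq0 n : (1 : Zs n)%R <> 0%R.
Proof. by move/eqP; rewrite GRing.oner_eq0. Qed.

Lemma Zs_nontrivial n : ~ forall x y : Zs n, x = y.
Proof. by move/(_ 1%R 0%R); apply: Zs_one_neq0. Qed.

Lemma Zs_A n m : 1 < n -> 0 < m -> models (A_var m) (Zs n) <-> n %| m.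
Proof.
move=> n1 m0; have pwE (x : Zs n) k : pw x k = (x *+ k.+1)%R.
  elim: k => [|k IH]; first by rewrite /= GRing.mulr1n.
  by rewrite pwS IH [in RHS]GRing.mulrSr.
rewrite modelsA; split=> [/(_ 1%R 0%R) | nm x y].
  rewrite /= pwE prednK // GRing.addr0 => m1.
  by rewrite /dvdn -(val_Zp_nat n1 m) m1.
rewrite /= pwE prednK // -GRing.mulr_natr.
have -> : (m%:R : 'Z_n)%R = 0%R by apply: val_inj; rewrite /= val_Zp_nat //; apply/eqP.
by rewrite GRing.mulr0 GRing.add0r.
Qed.

Lemma Zs_not_SL n : 1 < n -> ~ models SL_var (Zs n).
Proof.
move=> n1 /modelsSL/(_ 1%R) /= h11.
have : (1 + 1 = 1 + 0 :> 'Z_n)%R by rewrite GRing.addr0.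
by move/GRing.addrI/eqP; rewrite GRing.oner_eq0.
Qed.

Lemma A1_trivial : trivial_var (A_var 1).
Proof. by move=> T /modelsA hA x y; rewrite -(hA y x) csg_opC hA. Qed.

Lemma A_nontrivial n : 1 < n -> ~ trivial_var (A_var n).
Proof. by move=> n1 hA; apply: (@Zs_nontrivial n); apply: hA; apply/(Zs_A n1 (ltnW n1)). Qed.

Lemma subvar_A m n : 0 < m -> 0 < n -> subvar (A_var m) (A_var n) <-> m %| n.
Proof.
move=> m0 n0; split=> [hmn | mn S /modelsA hA].
  case: m m0 hmn => [//|[_ _ | m _ hmn]]; first exact: dvd1n.
  by apply/(Zs_A _ n0)/hmn/Zs_A.
apply/modelsA => x y; set u := pw x m.-1.
have uu : csg_op u u = u by apply: hA.
have ux : csg_op u x = x by apply: hA.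
have xm : upw u x m = u by rewrite -(prednK m0) upwS.
by rewrite -(upwS ux) prednK // (upw_dvd uu xm mn) hA.
Qed.

Lemma same_A_prime p q : prime p -> prime q ->
  same_variety (A_var p) (A_var q) -> p = q.
Proof.
move=> pp pq hpq; apply/eqP; rewrite -dvdn_prime2 //.
by apply/subvar_A; rewrite ?prime_gt0 //; apply: same_subvar.
Qed.

Lemma SL_sep_letter (S : comSemigroup) e : models SL_var S -> ~ sat S e ->
  exists f i, [/\ forall T, sat T e -> sat T f, i \in letters f.1 & i \notin letters f.2].
Proof.
move=> hS nSe; have [i ne] : exists i, (i \in letters e.1) != (i \in letters e.2).
  apply: NNPP => same; apply: nSe => v; apply: weval_content => [j | i].
    by move/modelsSL: hS.
  by apply/eqP; apply: contra_notT same => ne; exists i.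
move: ne; case: (boolP (i \in letters e.1)) => i1; case: (boolP (i \in letters e.2)) => i2 // _.
  by exists e, i.
by exists (e.2, e.1), i; split=> // T; apply: sat_sym.
Qed.

Lemma atom_SL : atom_var SL_var.
Proof.
apply: atom_of_sep => [hSL | S e hS nSe T hT hTe]; first exact: S2_nontrivial (hSL _ S2_SL).
have [f [i [hf i1 i2]]] := SL_sep_letter hS nSe.
exact: SL_sep hT (hf _ hTe) i1 i2.
Qed.

Lemma atom_ZM : atom_var ZM_var.
Proof.
apply: atom_of_sep => [hZM | S e hS nSe T hT hTe]; first exact: N2_nontrivial (hZM _ N2_ZM).
have [x [w [nw hw]]] := ZM_shape hS nSe.
exact: ZM_sep hT (hw _ hTe) nw.
Qed.

Lemma atom_A p : prime p -> atom_var (A_var p).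
Proof.
move=> pp; apply: atom_of_sep => [| S e hS nSe T hT hTe]; first exact/A_nontrivial/prime_gt1.
have [i ne] : exists i, count_mem i (letters e.1) %% p <> count_mem i (letters e.2) %% p.
  apply: NNPP => same; apply: nSe => v; apply: (weval_A_counts _ (prime_gt0 pp) hS) => i.
  by apply: NNPP => ne; apply: same; exists i.
exact: A_sep pp hT hTe ne.
Qed.

Lemma period_unit (S : comSemigroup) (s : S) k : 0 < k -> pw s k = s ->
  [/\ csg_op (pw s k.-1) (pw s k.-1) = pw s k.-1, csg_op (pw s k.-1) s = s
    & upw (pw s k.-1) s k = pw s k.-1].
Proof.
move=> k0 sk; have us : csg_op (pw s k.-1) s = s by rewrite -pwS prednK.
split=> //; last by rewrite -[X in upw _ _ X](prednK k0) upwS.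
by rewrite pw_op -addnS prednK // pw_period.
Qed.

Lemma A_upw n (S : comSemigroup) (x y : S) : 0 < n -> models (A_var n) S ->
  upw (pw x n.-1) y n = pw x n.-1.
Proof.
move=> n0 hS; rewrite -[X in upw _ _ X](prednK n0) (A_unit hS x y) upwS //.
by move/modelsA: hS; apply.
Qed.

Section CyclicSubvarieties.
Variables (V : presentation) (S : comSemigroup) (u : S).
Hypotheses (hS : models V S) (uu : csg_op u u = u).

(** Substituting [g] for one letter and [u] for all the others turns an
    identity of [V] into an equation between powers of [g]. *)
Lemma subvar_A_order g d : csg_op u g = g -> 0 < d -> upw u g d = u ->
  (forall k, upw u g k = u -> d %| k) -> subvar (A_var d) V.
Proof.
move=> ug d0 gd ord T hT e Ve v; apply: (weval_A_counts _ d0 hT) => i.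
have := hS Ve (fun j => if j == i then g else u).
rewrite !(weval_count (i := i) _ uu ug) // => g12.
case: (leqP (count_mem i (letters e.2)) (count_mem i (letters e.1))) => c21.
  by apply/eqP; rewrite eqn_mod_dvd //; apply/ord/(upw_subn uu d0 gd g12 c21).
apply/esym/eqP; rewrite eqn_mod_dvd ?(ltnW c21) //.
exact/ord/(upw_subn uu d0 gd (esym g12) (ltnW c21)).
Qed.

Lemma subvar_A_prime g q : csg_op u g = g -> prime q -> upw u g q = u -> g <> u ->
  subvar (A_var q) V.
Proof.
move=> ug pq gq gu; apply: (subvar_A_order ug (prime_gt0 pq) gq) => k gk.
apply: contra_notT gu; rewrite -prime_coprime // => /eqP cop.
by have := upw_gcd uu gq gk; rewrite cop (upw1 ug).
Qed.

Lemma exists_subvar_A_prime g k : csg_op u g = g -> 0 < k -> upw u g k = u ->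
  g <> u -> exists q, [/\ prime q, q %| k & subvar (A_var q) V].
Proof.
move=> ug; elim/ltn_ind: k => k IH k0 gk gu.
have [k1 | k1] := leqP k 1.
  have k_1 : k = 1 by apply/eqP; rewrite eqn_leq k1.
  by case: gu; rewrite -gk k_1 (upw1 ug).
have pq := pdiv_prime k1; have qk := pdiv_dvd k.
have kq0 : 0 < k %/ pdiv k by rewrite divn_gt0 ?(prime_gt0 pq) // dvdn_leq.
case: (classic (upw u g (k %/ pdiv k) = u)) => gkq.
  have [q [pq' qkq hq]] := IH _ (ltn_Pdiv (prime_gt1 pq) k0) kq0 gkq gu.
  by exists q; split=> //; apply: dvdn_trans qkq (dvdn_div qk).
exists (pdiv k); split=> //; apply: (subvar_A_prime (upw_unitl g uu _) pq _ gkq).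
by rewrite upwM // divnK.
Qed.

End CyclicSubvarieties.

Lemma exists_period V : ~ trivial_var V -> ~ subvar ZM_var V ->
  exists2 k, 0 < k & forall T, models V T -> forall a : T, pw a k = a.
Proof.
move=> ntV /not_subvar[N [hN /not_models[e [Ve nNe]]]].
have [x [[h t] [nw hw]]] := ZM_shape hN nNe.
case: t nw hw => [|j t] nw hw.
  case: ntV => T hT a b; have := hw T (hT e Ve) (fun k => if k == x then a else b).
  by rewrite /weval /= eqxx; case: eqP => // hx; rewrite hx in nw.
exists (size (j :: t)) => // T hT a.
by have := hw T (hT e Ve) (fun _ => a); rewrite !weval_const => /= <-.
Qed.

Lemma subvar_A_period V k : ~ subvar SL_var V -> 0 < k ->
  (forall T, models V T -> forall a : T, pw a k = a) -> subvar V (A_var k).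
Proof.
move=> /not_subvar[S [hS /not_models[e [Ve nSe]]]] k0 per T hT.
have [f [i [hf i1 i2]]] := SL_sep_letter hS nSe.
apply/modelsA => s t.
have [Ess _ _] := period_unit k0 (per T hT s).
have [Ett Et_t _] := period_unit k0 (per T hT t).
have st : csg_op (pw s k.-1) (pw t k.-1) = pw t k.-1.
  by case: (sat_sep Ess Ett (hf _ (hT e Ve)) i1 i2) => [-> | ->].
by rewrite -{1}Et_t csg_opA st.
Qed.

Lemma exists_subvar_A V : ~ trivial_var V -> ~ subvar ZM_var V -> ~ subvar SL_var V ->
  exists2 k, 0 < k & subvar V (A_var k).
Proof.
move=> ntV nZM nSL; have [k k0 per] := exists_period ntV nZM.
by exists k => //; apply: subvar_A_period.
Qed.

Lemma atom_subvar_A W k : atom_var W -> 0 < k -> subvar W (A_var k) ->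
  exists p, prime p /\ same_variety W (A_var p).
Proof.
move=> aW k0 hWk.
have [S [x [y [hS xy]]]] : exists (S : comSemigroup) (x y : S), models W S /\ x <> y.
  apply: NNPP => none; apply: aW.1 => S hS x y; apply: NNPP => xy.
  by apply: none; exists S, x, y.
have hA := hWk S hS; set u := pw x k.-1.
have [g gu] : exists g, g <> u.
  by case: (classic (x = u)) => [xu | ?]; [exists y; rewrite -xu => /esym | exists x].
have /modelsA unit_u := hA.
have [q [pq _ hq]] := exists_subvar_A_prime hS (unit_u x u) (unit_u x g) k0 (A_upw x g k0 hA) gu.
exists q; split=> //; apply: same_variety_sym.
exact: atom_subvar aW (A_nontrivial (prime_gt1 pq)) hq.
Qed.

Lemma atom_classification W : atom_var W ->
  [\/ same_variety W SL_var, same_variety W ZM_var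
    | exists p, prime p /\ same_variety W (A_var p)].
Proof.
move=> aW; case: (classic (subvar SL_var W)) => [SLW | nSLW].
  by constructor 1; apply/same_variety_sym/(atom_subvar aW atom_SL.1 SLW).
case: (classic (subvar ZM_var W)) => [ZMW | nZMW].
  by constructor 2; apply/same_variety_sym/(atom_subvar aW atom_ZM.1 ZMW).
have [k k0 hWk] := exists_subvar_A aW.1 nZMW nSLW.
by constructor 3; apply: atom_subvar_A aW k0 hWk.
Qed.

(** * Varieties with a sole atom *)

Lemma no_sole_atom_SL C : ~ sole_atom SL_var C.
Proof.
case=> SLC [neq sole].
have ntC : ~ trivial_var C by move=> tC; apply: S2_nontrivial; apply: tC (SLC _ S2_SL).
have nZM : ~ subvar ZM_var C.
  by move=> ZMC; apply: S2_not_ZM; apply/(sole _ atom_ZM ZMC)/S2_SL.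
have [k k0 per] := exists_period ntC nZM.
have nCSL : ~ subvar C SL_var by move=> CSL; apply/neq/subvar_antisym.
have [S [hS /modelsSL/not_all_ex_not[s ss]]] := not_subvar nCSL.
have [uu us su] := period_unit k0 (per S hS s).
have s_u : s <> pw s k.-1 by move=> e; apply: ss; rewrite e.
have [q [pq _ hq]] := exists_subvar_A_prime hS uu us k0 su s_u.
apply: (Zs_not_SL (prime_gt1 pq)); apply/(sole _ (atom_A pq) hq).
exact/(Zs_A (prime_gt1 pq) (prime_gt0 pq)).
Qed.

Lemma subvar_A_ppart p C k : prime p ->
  (forall q, prime q -> subvar (A_var q) C -> q = p) ->
  0 < k -> subvar C (A_var k) -> subvar C (A_var (p ^ logn p k)).
Proof.
move=> pp only_p k0 hCk S hS; have hA := hCk S hS; have /modelsA unit_u := hA.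
apply/modelsA => s t; set u := pw s k.-1; set g := upw u s k`_p.
have gp' : upw u g k`_p^' = u by rewrite upwM ?unit_u // partnC // A_upw.
case: (classic (g = u)) => [gu | ngu].
  by rewrite -p_part -(upwS (unit_u s s)) prednK ?part_gt0 // -/g gu unit_u.
have [q [pq qk' hq]] :=
  exists_subvar_A_prime hS (unit_u s u) (upw_unitl _ (unit_u s u) _) (part_gt0 _ _) gp' ngu.
rewrite (only_p q pq hq) in qk'.
by have := pnat_coprime (pnat_id pp) (part_pnat p^' k); rewrite prime_coprime // qk'.
Qed.

Lemma same_A_pexp p C b : prime p -> ~ trivial_var C -> subvar C (A_var (p ^ b)) ->
  exists b', same_variety C (A_var (p ^ b')).
Proof.
move=> pp ntC; elim: b => [|b IH] hCb.
  by exfalso; apply: ntC => S /hCb; rewrite expn0; apply: A1_trivial.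
case: (classic (subvar C (A_var (p ^ b)))) => [hC | nC]; first exact: IH.
exists b.+1; apply: (subvar_antisym hCb).
have [S [hS /modelsA/not_all_ex_not[s /not_all_ex_not[t st]]]] := not_subvar nC.
have hA := hCb S hS; have /modelsA unit_u := hA; set u := pw s (p ^ b.+1).-1.
have pb0 n : 0 < p ^ n by rewrite expn_gt0 prime_gt0.
apply: (subvar_A_order hS (unit_u s u) (unit_u s s) (pb0 _) (A_upw s s (pb0 _) hA)) => j sj.
have /(dvdn_pfactor _ _ pp)[c cb gE] := dvdn_gcdr j (p ^ b.+1).
have := upw_gcd (unit_u s u) sj (A_upw s s (pb0 _) hA); rewrite gE => sc.
move: cb; rewrite leq_eqVlt ltnS => /orP[/eqP cE | cb]; first by rewrite -cE -gE dvdn_gcdl.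
case: st; have := upw_dvd (unit_u s u) sc (dvdn_exp2l p cb).
by rewrite -[X in upw _ _ X](prednK (pb0 b)) (upwS (unit_u s s)) => ->.
Qed.

Lemma sole_atom_A_pow p C : prime p -> sole_atom (A_var p) C ->
  exists b, same_variety C (A_var (p ^ b)).
Proof.
move=> pp [pC [_ sole]].
have ntC : ~ trivial_var C.
  by move=> tC; apply: (A_nontrivial (prime_gt1 pp)) => S /pC; apply: tC.
have nZM : ~ subvar ZM_var C.
  by move=> ZMC; apply: (@N2_not_A p); apply/(sole _ atom_ZM ZMC)/N2_ZM.
have nSL : ~ subvar SL_var C.
  by move=> SLC; apply: (@S2_not_A p); apply/(sole _ atom_SL SLC)/S2_SL.
have [k k0 hCk] := exists_subvar_A ntC nZM nSL.
apply: (same_A_pexp pp ntC (subvar_A_ppart pp _ k0 hCk)) => q pq hq.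
exact: same_A_prime pq pp (sole _ (atom_A pq) hq).
Qed.

Lemma sole_atom_A_chain p C1 C2 : prime p ->
  sole_atom (A_var p) C1 -> sole_atom (A_var p) C2 -> subvar C1 C2 \/ subvar C2 C1.
Proof.
move=> pp /(sole_atom_A_pow pp)[b1 e1] /(sole_atom_A_pow pp)[b2 e2].
have le_pow (C C' : presentation) b b' : same_variety C (A_var (p ^ b)) ->
    same_variety C' (A_var (p ^ b')) -> b <= b' -> subvar C C'.
  move=> e e' bb; apply: subvar_trans (same_subvar e) _.
  apply: subvar_trans (same_subvar (same_variety_sym e')).
  by apply/subvar_A; rewrite ?expn_gt0 ?prime_gt0 // dvdn_exp2l.
by case: (leqP b1 b2) => b12; [left; apply: le_pow b12 | right; apply: le_pow (ltnW b12)].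
Qed.

Lemma sole_atom_A_sq p : prime p -> sole_atom (A_var p) (A_var (p * p)).
Proof.
move=> pp; have p0 := prime_gt0 pp; have pp0 : 0 < p * p by rewrite muln_gt0 p0.
split; first by apply/subvar_A => //; apply: dvdn_mulr.
split=> [/same_variety_sym/same_subvar | B aB hB].
  by rewrite subvar_A // => /(dvdn_leq p0); rewrite leqNgt ltn_Pmull ?prime_gt1.
case: (atom_classification aB) => [e | e | [q [pq e]]].
- by case: (@S2_not_A (p * p)); apply/hB/e/S2_SL.
- by case: (@N2_not_A (p * p)); apply/hB/e/N2_ZM.
- have := subvar_trans (same_subvar (same_variety_sym e)) hB.
  by rewrite subvar_A ?(prime_gt0 pq) // Euclid_dvdM // orbb dvdn_prime2 // => /eqP <-.
Qed.

Lemma ZM_sat (S : comSemigroup) (w1 w2 : word) : models ZM_var S ->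
  w1.2 != [::] -> w2.2 != [::] -> sat S (w1, w2).
Proof.
move=> hS; case: w1 => h1 [|j1 t1] //; case: w2 => h2 [|j2 t2] // _ _ v.
by rewrite /weval /= -!/(lprod v _ _) !(ZM_lprod v) //; apply: ZM_const.
Qed.

Lemma sole_atom_ZM_of_nil C (M : comSemigroup) :
  (forall e, C e -> e.1.2 != [::] /\ e.2.2 != [::]) ->
  models C M -> ~ models ZM_var M -> ~ models C S2 ->
  (forall q, prime q -> ~ models C (Zs q)) -> sole_atom ZM_var C.
Proof.
move=> nilC hM nZM nS2 nZs; split.
  by move=> S hS e /nilC[n1 n2]; case: e n1 n2 => w1 w2; apply: ZM_sat.
split=> [eq | B aB hB]; first exact/nZM/eq.
case: (atom_classification aB) => [e | // | [q [pq e]]].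
- by case: nS2; apply/hB/e/S2_SL.
- by case: (nZs q pq); apply/hB/e/(Zs_A (prime_gt1 pq) (prime_gt0 pq)).
Qed.

(** var{xyz = 0} and var{x^2 = 0, xyzt = 0} *)
Definition nil3_var : presentation := fun e => e = ((0, [:: 1; 2]), (3, [:: 4; 5])).
Definition sq_nil_var : presentation := fun e =>
  e = ((0, [:: 1; 2; 3]), (4, [:: 5; 6; 7])) \/ e = ((0, [:: 0]), (4, [:: 5; 6; 7])).

(** The nilsemigroup {a, a^2, 0}, encoded as a = 0, a^2 = 1 and 0 = 2. *)
Definition cyc3_op (i j : nat) : nat := if (i == 0) && (j == 0) then 1 else 2.

Lemma cyc3_opC i j : cyc3_op i j = cyc3_op j i.
Proof. by rewrite /cyc3_op andbC. Qed.

Lemma cyc3_op3 i j k : cyc3_op (cyc3_op i j) k = 2.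
Proof. by rewrite /cyc3_op; case: ((i == 0) && (j == 0)). Qed.

Lemma cyc3_opA i j k : cyc3_op i (cyc3_op j k) = cyc3_op (cyc3_op i j) k.
Proof. by rewrite cyc3_opC !cyc3_op3. Qed.

Definition Cyc3 : comSemigroup := ComSemigroup cyc3_opA cyc3_opC.

(** The commutative semigroup generated by three elements subject to x^2 = 0:
    the nonempty subsets of {1, 2, 3} under disjoint union, with [None] as zero. *)
Definition sq3 := option (bool * bool * bool).
Definition sq3_op (X Y : sq3) : sq3 :=
  match X, Y with
  | Some (a1, b1, c1), Some (a2, b2, c2) =>
    if [&& a1 || b1 || c1, a2 || b2 || c2, ~~ (a1 && a2), ~~ (b1 && b2) & ~~ (c1 && c2)]
    then Some (a1 || a2, b1 || b2, c1 || c2) else None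
  | _, _ => None
  end.

Lemma sq3_opA x y z : sq3_op x (sq3_op y z) = sq3_op (sq3_op x y) z.
Proof. by move: x y z; do 3! case=> [[[[] []] []]|]. Qed.

Lemma sq3_opC x y : sq3_op x y = sq3_op y x.
Proof. by move: x y; do 2! case=> [[[[] []] []]|]. Qed.

Lemma sq3_op4 x y z t : sq3_op (sq3_op (sq3_op x y) z) t = None.
Proof.
have [-> | ->] : sq3_op (sq3_op x y) z = None \/ sq3_op (sq3_op x y) z = Some (true, true, true).
  by move: x y z; do 3! case=> [[[[] []] []]|]; auto.
all: by case: t => [[[[] []] []]|].
Qed.

Lemma sq3_opxx x : sq3_op x x = None.
Proof. by case: x => [[[[] []] []]|]. Qed.

Definition Sq3 : comSemigroup := ComSemigroup sq3_opA sq3_opC.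

Lemma sole_atom_ZM_nil3 : sole_atom ZM_var nil3_var.
Proof.
apply: (@sole_atom_ZM_of_nil _ Cyc3).
- by move=> e ->.
- by move=> e -> v; rewrite /sat /weval /= !cyc3_op3.
- by move/modelsZM/(_ 0 0 0).
- by move=> hS2; have := hS2 _ erefl (fun j => j < 3).
- move=> q pq hZs; have := hZs _ erefl (fun j => if j == 0 then 1%R else 0%R).
  by rewrite /sat /weval /= ?GRing.addr0 ?GRing.add0r; apply: Zs_one_neq0.
Qed.

Lemma sole_atom_ZM_sq_nil : sole_atom ZM_var sq_nil_var.
Proof.
apply: (@sole_atom_ZM_of_nil _ Sq3).
- by move=> e [->|->].
- by move=> e [->|->] v; rewrite /sat /weval /= ?sq3_op4 ?sq3_opxx.
- by move/modelsZM/(_ (Some (true, false, false)) (Some (false, true, false))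
                     (Some (false, false, true))).
- by move=> hS2; have := hS2 _ (or_introl erefl) (fun j => j < 4).
- move=> q pq hZs; have := hZs _ (or_introl erefl) (fun j => if j == 0 then 1%R else 0%R).
  by rewrite /sat /weval /= ?GRing.addr0 ?GRing.add0r; apply: Zs_one_neq0.
Qed.

Lemma sq_nil_not_subvar_nil3 : ~ subvar sq_nil_var nil3_var.
Proof.
move=> h; have hSq3 : models sq_nil_var Sq3.
  by move=> e [->|->] v; rewrite /sat /weval /= ?sq3_op4 ?sq3_opxx.
by have := h _ hSq3 _ erefl (fun j => if j == 1 then Some (false, true, false)
  else if j == 2 then Some (false, false, true) else Some (true, false, false)).
Qed.

Lemma nil3_not_subvar_sq_nil : ~ subvar nil3_var sq_nil_var.
Proof.
move=> h; have hCyc3 : models nil3_var Cyc3.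
  by move=> e -> v; rewrite /sat /weval /= !cyc3_op3.
by have := h _ hCyc3 _ (or_intror erefl) (fun _ => 0).
Qed.

(** * Defining formulas *)

Definition bot_var : presentation := fun e => e = ((0, [::]), (1, [::])).

Lemma trivial_bot : trivial_var bot_var.
Proof. by move=> S hS x y; apply: (hS _ erefl (fun j => if j == 0 then x else y)). Qed.

Lemma trivial_subvar V : trivial_var V <-> forall W, subvar V W.
Proof.
split=> [tV W S hS | hV]; first exact/trivial_models/tV.
by move=> S /(hV bot_var); apply: trivial_bot.
Qed.

Definition f_le i j := FEq (LMeet (LVar i) (LVar j)) (LVar i).
Definition f_bot z y := FAll y (f_le z y).
Definition f_nontrivial a z y :=
  FEx z (FAnd (f_bot z y) (FNot (FEq (LVar a) (LVar z)))).
Definition f_atom a z y w := FAnd (f_nontrivial a z y)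
  (FAll y (FAll z (FImp (f_bot z w)
     (FOr (f_le a y) (FEq (LMeet (LVar a) (LVar y)) (LVar z)))))).
Definition f_sole_atom a c b t1 t2 t3 :=
  FAnd (f_le a c) (FAnd (FNot (FEq (LVar a) (LVar c)))
    (FAll b (FImp (f_atom b t1 t2 t3) (FImp (f_le b c) (FEq (LVar b) (LVar a)))))).

Lemma updE env n V m : upd env n V m = if m == n then V else env m.
Proof. by []. Qed.

Lemma holds_f_le env i j : holds env (f_le i j) <-> subvar (env i) (env j).
Proof. exact: same_vmeet_subvar. Qed.

Lemma holds_f_bot env z y : z != y -> holds env (f_bot z y) <-> trivial_var (env z).
Proof.
move=> zy; rewrite trivial_subvar; split=> h V.
  have hV : holds (upd env y V) (f_le z y) := h V.
  by move: hV; rewrite holds_f_le !updE eqxx (negbTE zy).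
by apply/holds_f_le; rewrite !updE eqxx (negbTE zy).
Qed.

Lemma holds_f_nontrivial env a z y : a != z -> z != y ->
  holds env (f_nontrivial a z y) <-> ~ trivial_var (env a).
Proof.
move=> az zy; split=> [[V [hV neq]] | ntA].
  have {}hV : holds (upd env z V) (f_bot z y) := hV.
  have {}neq : ~ same_variety (upd env z V a) (upd env z V z) := neq.
  move: hV neq; rewrite holds_f_bot // !updE eqxx (negbTE az) => tV neq tA.
  by apply: neq; apply/(same_trivial _ tV).
exists bot_var; split.
  change (holds (upd env z bot_var) (f_bot z y)).
  by rewrite holds_f_bot // updE eqxx; apply: trivial_bot.
change (~ same_variety (upd env z bot_var a) (upd env z bot_var z)).
rewrite !updE eqxx (negbTE az) => eq; apply: ntA.
exact: (proj1 (same_trivial _ trivial_bot) eq).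
Qed.

Lemma holds_f_atom env a z y w : a != z -> a != y -> z != y -> z != w ->
  holds env (f_atom a z y w) <-> atom_var (env a).
Proof.
move=> az ay zy zw.
pose F := FImp (f_bot z w) (FOr (f_le a y) (FEq (LMeet (LVar a) (LVar y)) (LVar z))).
have K Y Z : holds (upd (upd env y Y) z Z) F <->
    (trivial_var Z -> subvar (env a) Y \/ same_variety (vmeet (env a) Y) Z).
  set env' := upd (upd env y Y) z Z.
  have [ea ey ez] : [/\ env' a = env a, env' y = Y & env' z = Z].
    by rewrite /env' !updE (negbTE az) (negbTE ay) [y == z]eq_sym (negbTE zy) !eqxx.
  have -> : holds env' F = (holds env' (f_bot z w) -> holds env' (f_le a y) \/
                              same_variety (vmeet (env' a) (env' y)) (env' z)) by [].
  by rewrite holds_f_bot // holds_f_le ea ey ez.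
change (holds env (f_nontrivial a z y) /\ (forall Y Z, holds (upd (upd env y Y) z Z) F)
  <-> atom_var (env a)).
rewrite holds_f_nontrivial //; split=> [[ntA hA] | [ntA hA]]; split=> // Y.
  have [|eq] := proj1 (K Y bot_var) (hA Y bot_var) trivial_bot; first by left.
  by right; apply: (proj1 (same_trivial _ trivial_bot) eq).
move=> Z; apply/K => tZ; case: (hA Y) => [|tY]; first by left.
by right; apply: (proj2 (same_trivial _ tZ) tY).
Qed.

Lemma holds_f_sole_atom env a c b t1 t2 t3 : a != c -> a != b -> c != b ->
  b != t1 -> b != t2 -> t1 != t2 -> t1 != t3 ->
  holds env (f_sole_atom a c b t1 t2 t3) <-> sole_atom (env a) (env c).
Proof.
move=> ac ab cb bt1 bt2 t12 t13.
pose F := FImp (f_atom b t1 t2 t3) (FImp (f_le b c) (FEq (LVar b) (LVar a))).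
have K B : holds (upd env b B) F <->
    (atom_var B -> subvar B (env c) -> same_variety B (env a)).
  set env' := upd env b B.
  have -> : holds env' F = (holds env' (f_atom b t1 t2 t3) -> holds env' (f_le b c) ->
                              same_variety (env' b) (env' a)) by [].
  by rewrite holds_f_atom // holds_f_le /env' !updE eqxx (negbTE ab) (negbTE cb).
change (holds env (f_le a c) /\ ~ same_variety (env a) (env c) /\
  (forall B, holds (upd env b B) F) <-> sole_atom (env a) (env c)).
rewrite holds_f_le; split=> [[ac' [neq hB]] | [ac' [neq hB]]]; do 2!split=> //.
  by move=> B; apply/K.
by move=> B; apply/K/hB.
Qed.

Definition phi_SL := FAnd (f_atom 0 1 2 3) (FNot (FEx 1 (f_sole_atom 0 1 2 3 4 5))).
Definition phi_ZM := FAnd (f_atom 0 1 2 3) (FEx 1 (FEx 2 (FAnd (f_sole_atom 0 1 3 4 5 6)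
  (FAnd (f_sole_atom 0 2 3 4 5 6) (FAnd (FNot (f_le 1 2)) (FNot (f_le 2 1))))))).
Definition phi_A := FAnd (f_atom 0 1 2 3) (FAnd (FEx 1 (f_sole_atom 0 1 2 3 4 5))
  (FAll 1 (FAll 2 (FImp (f_sole_atom 0 1 3 4 5 6) (FImp (f_sole_atom 0 2 3 4 5 6)
     (FOr (f_le 1 2) (f_le 2 1))))))).

Lemma holds_ex_sole_atom env :
  holds env (FEx 1 (f_sole_atom 0 1 2 3 4 5)) <-> exists C, sole_atom (env 0) C.
Proof.
split=> [[C hC] | [C hC]]; exists C.
  have : holds (upd env 1 C) (f_sole_atom 0 1 2 3 4 5) := hC.
  by rewrite holds_f_sole_atom // !updE.
change (holds (upd env 1 C) (f_sole_atom 0 1 2 3 4 5)).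
by rewrite holds_f_sole_atom // !updE.
Qed.

Lemma holds_two_sole_atoms env C1 C2 :
  (holds (upd (upd env 1 C1) 2 C2) (f_sole_atom 0 1 3 4 5 6) <-> sole_atom (env 0) C1) /\
  (holds (upd (upd env 1 C1) 2 C2) (f_sole_atom 0 2 3 4 5 6) <-> sole_atom (env 0) C2) /\
  (holds (upd (upd env 1 C1) 2 C2) (f_le 1 2) <-> subvar C1 C2) /\
  (holds (upd (upd env 1 C1) 2 C2) (f_le 2 1) <-> subvar C2 C1).
Proof. by rewrite !holds_f_sole_atom // !holds_f_le. Qed.

Lemma holds_phi_SL env : holds env phi_SL <-> same_variety (env 0) SL_var.
Proof.
split=> [[/holds_f_atom aV nsole] | eSL].
  have {}aV := aV isT isT isT isT.
  have {}nsole : ~ exists C, sole_atom (env 0) C by move/holds_ex_sole_atom.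
  case: (atom_classification aV) => [// | eZM | [p [pp eA]]]; case: nsole.
    by exists sq_nil_var; apply: sole_atom_same (same_variety_sym eZM) sole_atom_ZM_sq_nil.
  by exists (A_var (p * p)); apply: sole_atom_same (same_variety_sym eA) (sole_atom_A_sq pp).
split; first by apply/holds_f_atom => //; apply: atom_var_same (same_variety_sym eSL) atom_SL.
by move/holds_ex_sole_atom => -[C hC]; apply: (@no_sole_atom_SL C); apply: sole_atom_same eSL hC.
Qed.

Lemma holds_phi_ZM env : holds env phi_ZM <-> same_variety (env 0) ZM_var.
Proof.
split=> [[/holds_f_atom aV [C1 [C2]]] | eZM].
  have {}aV := aV isT isT isT isT.
  have [E1 [E2 [E3 E4]]] := holds_two_sole_atoms env C1 C2.
  case=> /E1 h1 [/E2 h2 [n12 n21]].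
  case: (atom_classification aV) => [eSL | // | [p [pp eA]]]; exfalso.
    by apply: (@no_sole_atom_SL C1); apply: sole_atom_same eSL h1.
  case: (sole_atom_A_chain pp (sole_atom_same eA h1) (sole_atom_same eA h2)) => h.
    by apply/n12/E3.
  by apply/n21/E4.
split; first by apply/holds_f_atom => //; apply: atom_var_same (same_variety_sym eZM) atom_ZM.
exists sq_nil_var, nil3_var.
have [E1 [E2 [E3 E4]]] := holds_two_sole_atoms env sq_nil_var nil3_var.
split; first by apply/E1; apply: sole_atom_same (same_variety_sym eZM) sole_atom_ZM_sq_nil.
split; first by apply/E2; apply: sole_atom_same (same_variety_sym eZM) sole_atom_ZM_nil3.
by split; [move/E3; apply: sq_nil_not_subvar_nil3 | move/E4; apply: nil3_not_subvar_sq_nil].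
Qed.

Lemma holds_phi_A env :
  holds env phi_A <-> exists p, prime p /\ same_variety (env 0) (A_var p).
Proof.
split=> [[/holds_f_atom aV [/holds_ex_sole_atom [C hC] chain]] | [p [pp eA]]].
  have {}aV := aV isT isT isT isT.
  case: (atom_classification aV) => [eSL | eZM | //]; exfalso.
    by apply: (@no_sole_atom_SL C); apply: sole_atom_same eSL hC.
  have [E1 [E2 [E3 E4]]] := holds_two_sole_atoms env sq_nil_var nil3_var.
  set env' := upd (upd env 1 sq_nil_var) 2 nil3_var.
  have : holds env' (f_sole_atom 0 1 3 4 5 6) -> holds env' (f_sole_atom 0 2 3 4 5 6) ->
      holds env' (f_le 1 2) \/ holds env' (f_le 2 1) := chain sq_nil_var nil3_var.
  have sq_nil := sole_atom_same (same_variety_sym eZM) sole_atom_ZM_sq_nil.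
  have nil3 := sole_atom_same (same_variety_sym eZM) sole_atom_ZM_nil3.
  rewrite /env' E1 E2 E3 E4 => /(_ sq_nil nil3).
  by case; [apply: sq_nil_not_subvar_nil3 | apply: nil3_not_subvar_sq_nil].
split; first by apply/holds_f_atom => //; apply: atom_var_same (same_variety_sym eA) (atom_A pp).
split.
  apply/holds_ex_sole_atom; exists (A_var (p * p)).
  exact: sole_atom_same (same_variety_sym eA) (sole_atom_A_sq pp).
move=> C1 C2; have [E1 [E2 [E3 E4]]] := holds_two_sole_atoms env C1 C2.
change (holds (upd (upd env 1 C1) 2 C2) (f_sole_atom 0 1 3 4 5 6) ->
        holds (upd (upd env 1 C1) 2 C2) (f_sole_atom 0 2 3 4 5 6) ->
        holds (upd (upd env 1 C1) 2 C2) (f_le 1 2) \/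
        holds (upd (upd env 1 C1) 2 C2) (f_le 2 1)).
rewrite E1 E2 E3 E4 => h1 h2.
exact: sole_atom_A_chain pp (sole_atom_same eA h1) (sole_atom_same eA h2).
Qed.

Theorem mainTheorem10 :
  [/\ definable_set (fun V => exists p, prime p /\ same_variety V (A_var p)),
      definable_elem SL_var
    & definable_elem ZM_var].
Proof.
split.
- by exists phi_A => env; apply: holds_phi_A.
- by exists phi_SL => env; apply: holds_phi_SL.
- by exists phi_ZM => env; apply: holds_phi_ZM.
Qed.
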